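(* Let $f(t)=t^6+r_1t^5+r_2t^4+r_3t^3+r_4t^2+r_5t+r_6\in\mathbb{R}[t]$ and suppose that all roots of $f$ (counted in $\mathbb{C}$) are real and strictly positive. Then: (1) $r_1<0$; (2) $r_2>0$ and $r_2\le \frac{5}{12}r_1^2$; (3) $r_3<0$ and, writing $D=25r_1^2-60r_2$ (which is $\ge 0$ by (2)), $$-\tfrac13 r_1^2\sqrt{D}+\tfrac{1}{225}D^{3/2}+\tfrac45 r_2\sqrt{D}\;\le\;\tfrac{10}{9}r_1^3-4r_1r_2+6r_3\;\le\;\tfrac13 r_1^2\sqrt{D}-\tfrac{1}{225}D^{3/2}-\tfrac45 r_2\sqrt{D};$$ (4) $r_4>0$; (5) $r_5<0$. *)

From mathcomp Require Import all_boot all_order all_algebra.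
From mathcomp Require Export complex.
Set Implicit Arguments. Unset Strict Implicit. Unset Printing Implicit Defensive.
Import Order.TTheory GRing.Theory Num.Theory.
Local Open Scope ring_scope.

Definition sextic (R : rcfType) (r1 r2 r3 r4 r5 r6 : R) : {poly R} :=
  'X^6 + r1 *: 'X^5 + r2 *: 'X^4 + r3 *: 'X^3 + r4 *: 'X^2 + r5 *: 'X + r6%:P.

From mathcomp Require Import all_boot all_order all_algebra.
From mathcomp Require Import complex ring lra.
Set Implicit Arguments. Unset Strict Implicit. Unset Printing Implicit Defensive.
Import Order.TTheory GRing.Theory Num.Theory.
Local Open Scope ring_scope.

(* Vieta's formulas for six positive roots x_i give the signs of r1, ..., r5.
   For (2) and (3) pass to the deviations y_i = x_i + r1/6 from the mean:
   sum_i y_i = 0, 30 sum_i y_i^2 = D and 2 sum_i y_i^3 = -(10/9 r1^3 - 4 r1 r2 + 6 r3),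
   so (2) is D >= 0.  With b = sqrt D / 30 the Laguerre-Samuelson inequality
   gives |y_i| <= 5 b, hence sum_i (y_i - b)^2 (5 b + y_i) >= 0, which expands to
   sum_i y_i^3 >= -120 b^3; applied to -y as well this is (3). *)

Section PowerSums.
Variable R : realFieldType.
Implicit Types (s : seq R) (a b c d x : R).

Lemma sum_cubic s a b c d :
  \sum_(y <- s) (a * y ^+ 3 + b * y ^+ 2 + c * y + d) =
  a * \sum_(y <- s) y ^+ 3 + b * \sum_(y <- s) y ^+ 2 + c * \sum_(y <- s) y
  + (size s)%:R * d.
Proof.
elim: s => [|y s IHs]; first by rewrite !big_nil mul0r !mulr0 !addr0.
by rewrite !big_cons IHs /= -natr1; ring.
Qed.

Lemma sqr_sum_le s :
  (\sum_(y <- s) y) ^+ 2 <= (size s)%:R * \sum_(y <- s) y ^+ 2.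
Proof.
elim: s => [|x s IHs]; first by rewrite !big_nil expr0n mul0r.
rewrite !big_cons /= -natr1.
set k := (size s)%:R in IHs *; set S := \sum_(y <- s) y in IHs *.
set Q := \sum_(y <- s) y ^+ 2 in IHs *.
have k_ge0 : 0 <= k by exact: ler0n.
have Q_ge0 : 0 <= Q by rewrite /Q big_seq; apply: sumr_ge0 => y _; exact: sqr_ge0.
suff : 2 * x * S <= k * x ^+ 2 + Q by lra.
have [k0|k_gt0] := eqVneq k 0.
  rewrite k0 mul0r in IHs *.
  have -> : S = 0 by apply/eqP; rewrite -sqrf_eq0 eq_le sqr_ge0 andbT.
  lra.
have k_pos : 0 < k by rewrite lt_def k_gt0 k_ge0.
rewrite -subr_ge0 -(pmulr_rge0 _ k_pos).
by have := sqr_ge0 (k * x - S); nra.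
Qed.

Lemma laguerre_samuelson s x : \sum_(y <- s) y = 0 -> x \in s ->
  (size s)%:R * x ^+ 2 <= ((size s)%:R - 1) * \sum_(y <- s) y ^+ 2.
Proof.
move=> s0 xs; have size_s_gt0 : (0 < size s)%N by case: (s) xs.
have := sqr_sum_le (rem x s); rewrite size_rem //.
have -> : (size s).-1%:R = (size s)%:R - 1 :> R.
  by rewrite -[in RHS](prednK size_s_gt0) -natr1 addrK.
rewrite !(big_rem x xs) /= in s0 *.
have -> : \sum_(y <- rem x s) y = - x by lra.
rewrite sqrrN; lra.
Qed.

Lemma power_sum3_ge s b : \sum_(y <- s) y = 0 -> 0 <= b ->
  \sum_(y <- s) y ^+ 2 = (size s)%:R * ((size s)%:R - 1) * b ^+ 2 ->
  - ((size s)%:R * ((size s)%:R - 1) * ((size s)%:R - 2) * b ^+ 3)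
    <= \sum_(y <- s) y ^+ 3.
Proof.
move=> s0 b_ge0 s2; set n := (size s)%:R in s2 *.
have term_ge0 y : y \in s -> 0 <= (y - b) ^+ 2 * ((n - 1) * b + y).
  move=> ys; apply: mulr_ge0; first exact: sqr_ge0.
  have n_ge1 : 1 <= n by rewrite /n ler1n; case: (s) ys.
  have := laguerre_samuelson s0 ys; rewrite s2 => ls.
  have : y ^+ 2 <= ((n - 1) * b) ^+ 2.
    by rewrite -(@ler_pM2l _ n) ?(lt_le_trans ltr01 n_ge1) //; lra.
  have c_ge0 : 0 <= (n - 1) * b by apply: mulr_ge0; lra.
  rewrite -real_normK ?num_real // ler_sqr ?nnegrE //.
  by case/ler_normlP; lra.
have expand : \sum_(y <- s) (y - b) ^+ 2 * ((n - 1) * b + y) =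
    \sum_(y <- s) y ^+ 3 + n * (n - 1) * (n - 2) * b ^+ 3.
  have cubic y : (y - b) ^+ 2 * ((n - 1) * b + y) = 1 * y ^+ 3
      + ((n - 1) * b - 2 * b) * y ^+ 2 + (b ^+ 2 - 2 * b * ((n - 1) * b)) * y
      + b ^+ 2 * ((n - 1) * b) by ring.
  under eq_bigr do rewrite cubic.
  rewrite sum_cubic s0 s2 -/n; ring.
have : 0 <= \sum_(y <- s) (y - b) ^+ 2 * ((n - 1) * b + y).
  by rewrite big_seq; apply: sumr_ge0 => y; exact: term_ge0.
rewrite expand; lra.
Qed.

Lemma abs_power_sum3_le s b : \sum_(y <- s) y = 0 -> 0 <= b ->
  \sum_(y <- s) y ^+ 2 = (size s)%:R * ((size s)%:R - 1) * b ^+ 2 ->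
  `|\sum_(y <- s) y ^+ 3|
    <= (size s)%:R * ((size s)%:R - 1) * ((size s)%:R - 2) * b ^+ 3.
Proof.
move=> s0 b_ge0 s2; rewrite ler_norml power_sum3_ge //=.
have cubeN (y : R) : (- y) ^+ 3 = - y ^+ 3 by ring.
have := @power_sum3_ge [seq - y | y <- s] b.
rewrite size_map !big_map sumrN s0 oppr0.
rewrite (eq_bigr _ (fun y _ => sqrrN y)) (eq_bigr _ (fun y _ => cubeN y)).
by rewrite sumrN lerNl opprK => ->.
Qed.
End PowerSums.

Section Sextic.
Variable R : rcfType.

Definition esym1 (x1 x2 x3 x4 x5 x6 : R) : R := x1 + x2 + x3 + x4 + x5 + x6.
Definition esym2 (x1 x2 x3 x4 x5 x6 : R) : R :=
  x1*x2 + x1*x3 + x1*x4 + x1*x5 + x1*x6 + x2*x3 + x2*x4 + x2*x5 + x2*x6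
  + x3*x4 + x3*x5 + x3*x6 + x4*x5 + x4*x6 + x5*x6.
Definition esym3 (x1 x2 x3 x4 x5 x6 : R) : R :=
  x1*x2*x3 + x1*x2*x4 + x1*x2*x5 + x1*x2*x6 + x1*x3*x4 + x1*x3*x5 + x1*x3*x6
  + x1*x4*x5 + x1*x4*x6 + x1*x5*x6 + x2*x3*x4 + x2*x3*x5 + x2*x3*x6 + x2*x4*x5
  + x2*x4*x6 + x2*x5*x6 + x3*x4*x5 + x3*x4*x6 + x3*x5*x6 + x4*x5*x6.
Definition esym4 (x1 x2 x3 x4 x5 x6 : R) : R :=
  x1*x2*x3*x4 + x1*x2*x3*x5 + x1*x2*x3*x6 + x1*x2*x4*x5 + x1*x2*x4*x6
  + x1*x2*x5*x6 + x1*x3*x4*x5 + x1*x3*x4*x6 + x1*x3*x5*x6 + x1*x4*x5*x6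
  + x2*x3*x4*x5 + x2*x3*x4*x6 + x2*x3*x5*x6 + x2*x4*x5*x6 + x3*x4*x5*x6.
Definition esym5 (x1 x2 x3 x4 x5 x6 : R) : R :=
  x1*x2*x3*x4*x5 + x1*x2*x3*x4*x6 + x1*x2*x3*x5*x6 + x1*x2*x4*x5*x6
  + x1*x3*x4*x5*x6 + x2*x3*x4*x5*x6.
Definition esym6 (x1 x2 x3 x4 x5 x6 : R) : R := x1*x2*x3*x4*x5*x6.

Lemma prod_XsubC6 (x1 x2 x3 x4 x5 x6 : R) :
  \prod_(x <- [:: x1; x2; x3; x4; x5; x6]) ('X - x%:P) =
  sextic (- esym1 x1 x2 x3 x4 x5 x6) (esym2 x1 x2 x3 x4 x5 x6)
         (- esym3 x1 x2 x3 x4 x5 x6) (esym4 x1 x2 x3 x4 x5 x6)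
         (- esym5 x1 x2 x3 x4 x5 x6) (esym6 x1 x2 x3 x4 x5 x6).
Proof.
rewrite !big_cons big_nil mulr1 /sextic /esym1 /esym2 /esym3 /esym4 /esym5 /esym6.
rewrite -!mul_polyC !(polyCN, polyCD, polyCM); ring.
Qed.

Lemma esym_gt0 (x1 x2 x3 x4 x5 x6 : R) :
  0 < x1 -> 0 < x2 -> 0 < x3 -> 0 < x4 -> 0 < x5 -> 0 < x6 ->
  [/\ 0 < esym1 x1 x2 x3 x4 x5 x6, 0 < esym2 x1 x2 x3 x4 x5 x6,
      0 < esym3 x1 x2 x3 x4 x5 x6, 0 < esym4 x1 x2 x3 x4 x5 x6
    & 0 < esym5 x1 x2 x3 x4 x5 x6].
Proof.
move=> *; split; rewrite /esym1 /esym2 /esym3 /esym4 /esym5;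
  by repeat (apply: addr_gt0 || apply: mulr_gt0).
Qed.

Lemma sextic_polyseq (r1 r2 r3 r4 r5 r6 : R) :
  sextic r1 r2 r3 r4 r5 r6 = [:: r6; r5; r4; r3; r2; r1; 1] :> seq R.
Proof.
rewrite -[RHS](@PolyK _ 0) ?oner_neq0 //; congr polyseq; apply/polyP => i.
rewrite coef_Poly /sextic !coefE.
by do 7?[case: i => [|i]]; rewrite /= ?mulr0 ?mulr1 ?addr0 ?add0r ?nth_nil.
Qed.

Lemma sextic_monic (r1 r2 r3 r4 r5 r6 : R) : sextic r1 r2 r3 r4 r5 r6 \is monic.
Proof. by rewrite monicE lead_coefE sextic_polyseq. Qed.

Lemma monic_positive_real_roots (p : {poly R}) : p \is monic ->
  (forall z : R[i], root (map_poly (real_complex R) p) z ->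
     complex.Im z = 0 /\ 0 < complex.Re z) ->
  exists2 s : seq R, p = \prod_(x <- s) ('X - x%:P) & forall x, x \in s -> 0 < x.
Proof.
move=> p_monic p_roots.
have [rs p_split] := closed_field_poly_normal (map_poly (real_complex R) p).
rewrite lead_coef_map (monicP p_monic) rmorph1 scale1r in p_split.
have rs_real z : z \in rs -> z = real_complex R (complex.Re z) /\ 0 < complex.Re z.
  move=> zrs; have := p_roots z; rewrite p_split root_prod_XsubC => /(_ zrs) [zI zR].
  by split => //; case: z zI {zrs zR} => a b /= ->.
exists (map (@complex.Re R) rs); last by move=> _ /mapP[z /rs_real[_ +] ->].
apply: (map_poly_inj (real_complex R)).
rewrite p_split rmorph_prod big_map; apply: eq_big_seq => z zrs.
by rewrite rmorphB /= map_polyX map_polyC /= -(rs_real z zrs).1.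
Qed.

Lemma centered_cubic_bounds (t : seq R) (r1 r2 r3 : R) :
  size t = 6%N -> \sum_(y <- t) y = 0 ->
  30 * \sum_(y <- t) y ^+ 2 = 25 * r1 ^+ 2 - 60 * r2 ->
  2 * \sum_(y <- t) y ^+ 3 = - (10/9 * r1 ^+ 3 - 4 * r1 * r2 + 6 * r3) ->
  let D := 25 * r1 ^+ 2 - 60 * r2 in
  (- (1/3) * r1 ^+ 2 * Num.sqrt D + 1/225 * (D * Num.sqrt D) + 4/5 * r2 * Num.sqrt D
     <= 10/9 * r1 ^+ 3 - 4 * r1 * r2 + 6 * r3) /\
  (10/9 * r1 ^+ 3 - 4 * r1 * r2 + 6 * r3
     <= 1/3 * r1 ^+ 2 * Num.sqrt D - 1/225 * (D * Num.sqrt D) - 4/5 * r2 * Num.sqrt D).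
Proof.
move=> size_t t1 t2 t3 D.
have D_ge0 : 0 <= D.
  rewrite /D -t2 mulr_ge0 // big_seq; apply: sumr_ge0 => y _; exact: sqr_ge0.
move: (sqr_sqrtr D_ge0) (sqrtr_ge0 D); rewrite /D; set S := Num.sqrt _ => S2 S_ge0.
have S3 : S ^+ 3 = S * (25 * r1 ^+ 2 - 60 * r2) by rewrite -S2; ring.
have t2' : \sum_(y <- t) y ^+ 2 = (size t)%:R * ((size t)%:R - 1) * (S / 30) ^+ 2.
  by rewrite size_t; lra.
have := abs_power_sum3_le t1 (divr_ge0 S_ge0 (ler0n _ 30)) t2'.
rewrite size_t ler_norml => /andP[lo hi].
split; lra.
Qed.

Lemma positive_roots_coef_bounds (x1 x2 x3 x4 x5 x6 r1 r2 r3 r4 r5 : R) :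
  0 < x1 -> 0 < x2 -> 0 < x3 -> 0 < x4 -> 0 < x5 -> 0 < x6 ->
  r1 = - esym1 x1 x2 x3 x4 x5 x6 -> r2 = esym2 x1 x2 x3 x4 x5 x6 ->
  r3 = - esym3 x1 x2 x3 x4 x5 x6 -> r4 = esym4 x1 x2 x3 x4 x5 x6 ->
  r5 = - esym5 x1 x2 x3 x4 x5 x6 ->
  let D := 25 * r1 ^+ 2 - 60 * r2 in
  [/\ r1 < 0,
      0 < r2 /\ r2 <= 5 / 12 * r1 ^+ 2,
      r3 < 0 /\
      (- (1/3) * r1 ^+ 2 * Num.sqrt D + 1/225 * (D * Num.sqrt D) + 4/5 * r2 * Num.sqrt D
         <= 10/9 * r1 ^+ 3 - 4 * r1 * r2 + 6 * r3) /\
      (10/9 * r1 ^+ 3 - 4 * r1 * r2 + 6 * r3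
         <= 1/3 * r1 ^+ 2 * Num.sqrt D - 1/225 * (D * Num.sqrt D) - 4/5 * r2 * Num.sqrt D),
      0 < r4
    & r5 < 0].
Proof.
move=> x1_gt0 x2_gt0 x3_gt0 x4_gt0 x5_gt0 x6_gt0 -> -> -> -> -> D.
have [e1_gt0 e2_gt0 e3_gt0 e4_gt0 e5_gt0] :=
  esym_gt0 x1_gt0 x2_gt0 x3_gt0 x4_gt0 x5_gt0 x6_gt0.
pose m := esym1 x1 x2 x3 x4 x5 x6 / 6.
pose t := [:: x1 - m; x2 - m; x3 - m; x4 - m; x5 - m; x6 - m].
have t1 : \sum_(y <- t) y = 0.
  by rewrite !big_cons big_nil /m /esym1; field.
have t2 : 30 * \sum_(y <- t) y ^+ 2 =
    25 * (- esym1 x1 x2 x3 x4 x5 x6) ^+ 2 - 60 * esym2 x1 x2 x3 x4 x5 x6.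
  by rewrite !big_cons big_nil /m /esym1 /esym2; field.
have t3 : 2 * \sum_(y <- t) y ^+ 3 =
    - (10/9 * (- esym1 x1 x2 x3 x4 x5 x6) ^+ 3
       - 4 * (- esym1 x1 x2 x3 x4 x5 x6) * esym2 x1 x2 x3 x4 x5 x6
       + 6 * (- esym3 x1 x2 x3 x4 x5 x6)).
  by rewrite !big_cons big_nil /m /esym1 /esym2 /esym3; field.
have t2_ge0 : 0 <= \sum_(y <- t) y ^+ 2.
  by rewrite big_seq; apply: sumr_ge0 => y _; exact: sqr_ge0.
split; rewrite ?oppr_lt0 //; first by split=> //; lra.
by split=> //; exact: centered_cubic_bounds t1 t2 t3.
Qed.

End Sextic.

Theorem mainTheorem1 (R : rcfType) (r1 r2 r3 r4 r5 r6 : R) :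
  (forall z : R[i], root (map_poly (real_complex R) (sextic r1 r2 r3 r4 r5 r6)) z ->
     complex.Im z = 0 /\ 0 < complex.Re z) ->
  let D := 25 * r1 ^+ 2 - 60 * r2 in
  [/\ r1 < 0,
      0 < r2 /\ r2 <= 5 / 12 * r1 ^+ 2,
      r3 < 0 /\
      (- (1/3) * r1 ^+ 2 * Num.sqrt D + 1/225 * (D * Num.sqrt D) + 4/5 * r2 * Num.sqrt D
         <= 10/9 * r1 ^+ 3 - 4 * r1 * r2 + 6 * r3) /\
      (10/9 * r1 ^+ 3 - 4 * r1 * r2 + 6 * r3
         <= 1/3 * r1 ^+ 2 * Num.sqrt D - 1/225 * (D * Num.sqrt D) - 4/5 * r2 * Num.sqrt D),
      0 < r4
    & r5 < 0].
Proof.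
move=> f_roots.
have [s f_split s_pos] := monic_positive_real_roots (sextic_monic _ _ _ _ _ _) f_roots.
have := congr1 (fun p : {poly R} => size p) f_split.
rewrite /= sextic_polyseq size_prod_XsubC.
case: s f_split s_pos => [|x1 [|x2 [|x3 [|x4 [|x5 [|x6 [|]]]]]]] // f_split s_pos _.
move/(congr1 polyseq): f_split; rewrite prod_XsubC6 !sextic_polyseq.
case=> _ r5E r4E r3E r2E r1E.
by apply: (positive_roots_coef_bounds _ _ _ _ _ _ r1E r2E r3E r4E r5E);
  apply: s_pos; rewrite !inE eqxx ?orbT.
Qed.
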